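(* Let $\mathbf{X}$ be an $N$-sgrp over $\mathbb{R}^d$ on $[0,T]$ and $(f_1,\dots,f_d)$ smooth vector fields on $\mathbb{R}^e$ with bounded derivatives of all orders. A path $Y:[0,T]\to\mathbb{R}^e$ is a solution of the differential equation driven by $\mathbf{X}$ with vector fields $(f_1,\dots,f_d)$ if and only if for all $s,t\in[0,T]$ $$Y_t-Y_s=\sum_{1\le|w|\le N}f_w(Y_s)\langle\mathbf{X}_{s,t},w\rangle+r_{s,t},$$ where $\mathbf{X}_{s,t}=\mathbf{X}_s^{-1}\otimes_N\mathbf{X}_t$ and $r_{s,t}=o(|t-s|)$ as $t\to s$.
   Context: Fix $T>0$, $d,e\ge1$. $T^N(\mathbb{R}^d)$: span of words $w$ in letters $\{1,\dots,d\}$ of length $|w|\le N$ (incl. empty word $\mathbf{1}$), with truncated concatenation product $\otimes_N$; $\langle\mathbf{x},w\rangle$ is the coefficient of $w$ in $\mathbf{x}$. Shuffle product: bilinear, unit $\mathbf{1}$, $wi\sqcup\!\sqcup vj=(w\sqcup\!\sqcup vj)i+(wi\sqcup\!\sqcup v)j$. An $N$-sgrp is a non-zero path $\mathbf{X}:[0,T]\to T^N(\mathbb{R}^d)$ with $\langle\mathbf{X}_t,v\sqcup\!\sqcup w\rangle=\langle\mathbf{X}_t,v\rangle\langle\mathbf{X}_t,w\rangle$ for all $t$ and words with $|v|+|w|\le N$, and with $t\mapsto\langle\mathbf{X}_t,w\rangle$ smooth for $|w|\le N$ (then $\langle\mathbf{X}_t,\mathbf{1}\rangle=1$ and $\mathbf{X}_t$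 is $\otimes_N$-invertible). Its diagonal derivative is $\dot{\mathbf{X}}_{s,s}=\partial_t|_{t=s}\mathbf{X}_{s,t}$ with $\mathbf{X}_{s,t}=\mathbf{X}_s^{-1}\otimes_N\mathbf{X}_t$. For vector fields $f=f^i\partial_i$, $g=g^j\partial_j$ on $\mathbb{R}^e$ let $f\vartriangleright g:=f^i(\partial_ig^j)\partial_j$. Set $f_{\mathbf{1}}=\mathrm{id}$ and for $w=\ell_1\cdots\ell_n$, $n\ge1$, $f_w:=f_{\ell_1}\vartriangleright(\cdots\vartriangleright(f_{\ell_{n-1}}\vartriangleright f_{\ell_n})\cdots)$. A smooth path $Y$ is a solution of the differential equation driven by $\mathbf{X}$ with vector fields $(f_1,\dots,f_d)$ if $\dot Y_s=\sum_{|w|\le N}f_w(Y_s)\langle\dot{\mathbf{X}}_{s,s},w\rangle$ for all $s$ (note $\langle\dot{\mathbf{X}}_{s,s},\mathbf{1}\rangle=0$). *)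

From HB Require Import structures.
From mathcomp Require Import all_boot all_order all_algebra.
From mathcomp Require Import all_classical all_reals all_analysis.
Set Implicit Arguments. Unset Strict Implicit. Unset Printing Implicit Defensive.
Import Order.TTheory GRing.Theory Num.Theory.
Import numFieldNormedType.Exports.
Local Open Scope classical_set_scope.
Local Open Scope ring_scope.

Section Defs.
Variable R : realType.

(* Letters {1,..,d} are modelled by 'I_d; words by seq 'I_d.
   An element of T^N(R^d) is given by its coefficients x : seq 'I_d -> R,
   only the coefficients of words of length <= N being meaningful. *)
Definition tens (d : nat) := seq 'I_d -> R.

Definition tunit d : tens d := fun w => if w is [::] then 1 else 0.

Definition tmul d (N : nat) (x y : tens d) : tens d := fun w =>
  if (size w <= N)%N then \sum_(0 <= i < (size w).+1) x (take i w) * y (drop i w)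
  else 0.

Fixpoint tpow d N (x : tens d) (k : nat) : tens d :=
  if k is k'.+1 then tmul N x (tpow N x k') else @tunit d.

(* inverse in T^N of an element with unit constant coefficient:
   x^{-1} = sum_{k=0}^N (1 - x)^{(x)_N k} *)
Definition tinv d N (x : tens d) : tens d := fun w =>
  \sum_(0 <= k < N.+1) tpow N (fun u => @tunit d u - x u) k w.

(* shuffle product of words, as the list (with multiplicity) of words
   occurring in it.  shr works on reversed words and implements
   wi ⧢ vj = (w ⧢ vj) i + (wi ⧢ v) j. *)
Fixpoint shr d (a : seq 'I_d) : seq 'I_d -> seq (seq 'I_d) :=
  fun b => match a with
  | [::] => [:: b]
  | i :: a' =>
      let fix shr2 (b : seq 'I_d) : seq (seq 'I_d) :=
        match b with
        | [::] => [:: a]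
        | j :: b' => map (cons i) (shr a' b) ++ map (cons j) (shr2 b')
        end in shr2 b
  end.

Definition shuffle d (w v : seq 'I_d) : seq (seq 'I_d) :=
  map (@rev _) (shr (rev w) (rev v)).

Definition coef_shuffle d (x : tens d) (w v : seq 'I_d) : R :=
  \sum_(u <- shuffle w v) x u.

Definition I0T (T : R) : set R := [set t | 0 <= t <= T].

Definition derivw (V : normedModType R) (T : R) (f : R -> V) (t : R) (l : V) :=
  (fun h : R => h^-1 *: (f (t + h) - f t)) @ within [set h | 0 <= t + h <= T] (0 : R)^'
    --> l.

Definition smooth_on (V : normedModType R) (T : R) (f : R -> V) :=
  exists D : nat -> R -> V,
    (forall t, I0T T t -> D 0%N t = f t) /\
    (forall n t, I0T T t -> derivw T (D n) t (D n.+1 t)).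

Definition sgrp (T : R) (d N : nat) (X : R -> tens d) :=
  (forall t, I0T T t -> exists w : seq 'I_d, (size w <= N)%N /\ X t w != 0) /\
  (forall t, I0T T t -> forall v w : seq 'I_d, (size v + size w <= N)%N ->
      coef_shuffle (X t) v w = X t v * X t w) /\
  (forall w : seq 'I_d, (size w <= N)%N -> smooth_on T (fun t => X t w)).

Definition Xinc d N (X : R -> tens d) (s t : R) : tens d :=
  tmul N (tinv N (X s)) (X t).

Definition Xdot d N (T : R) (X : R -> tens d) (s : R) (w : seq 'I_d) : R :=
  lim ((fun h : R => h^-1 * (Xinc N X s (s + h) w - Xinc N X s s w))
         @ within [set h | 0 <= s + h <= T] (0 : R)^').

Definition vf (e : nat) := 'rV[R]_e -> 'rV[R]_e.

Definition vf_act e (f g : vf e) : vf e := fun y => 'D_(f y) g y.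

Fixpoint fword d e (f : 'I_d -> vf e) (w : seq 'I_d) : vf e :=
  match w with
  | [::] => id
  | [:: l] => f l
  | l :: w' => vf_act (f l) (fword f w')
  end.

Fixpoint Dn e (g : vf e) (vs : seq 'rV[R]_e) : vf e :=
  match vs with
  | [::] => g
  | v :: vs' => fun y => 'D_v (Dn g vs') y
  end.

Definition smooth_bdd e (g : vf e) :=
  (forall (vs : seq 'rV[R]_e) (y : 'rV[R]_e), differentiable (Dn g vs) y) /\
  (forall n : nat, (0 < n)%N -> exists C : R, forall (vs : seq 'rV[R]_e) (y : 'rV[R]_e),
      size vs = n -> (forall v, v \in vs -> `|v| <= 1) -> `|Dn g vs y| <= C).

Definition rde_solution d e N (T : R) (X : R -> tens d) (f : 'I_d -> vf e)
    (Y : R -> 'rV[R]_e) :=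
  smooth_on T Y /\
  forall s, I0T T s ->
    derivw T Y s (\sum_(0 <= k < N.+1) \sum_(w : k.-tuple 'I_d)
                     Xdot N T X s w *: fword f w (Y s)).

End Defs.

From HB Require Import structures.
From mathcomp Require Import all_boot all_order all_algebra.
From mathcomp Require Import all_classical all_reals all_analysis.
From mathcomp Require Import zify ring lra.
Set Implicit Arguments. Unset Strict Implicit. Unset Printing Implicit Defensive.
Import Order.TTheory GRing.Theory Num.Theory.
Import numFieldNormedType.Exports.
Local Open Scope classical_set_scope.
Local Open Scope ring_scope.

(* Write A_{s,t} for the truncated signature expansion
   sum_{1 <= |w| <= N} <X_{s,t}, w> f_w(Y_s).  Since X_{s,s} = 1, A_{s,s} = 0,
   and d/dt A_{s,t} at t = s is the right-hand side of the equation at s.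
   Hence the remainder Y_t - Y_s - A_{s,t} is o(|t - s|) exactly when Y is
   differentiable at s with the prescribed derivative.  The remaining point is
   that such a Y is automatically smooth: if Y solves the equation, then for a
   smooth coefficient a and an infinitely differentiable h, the derivative of
   a(s) h(Y_s) is a finite sum of terms of the same form, so by induction these
   functions are C^n for every n; the coordinates of Y are the case a = 1. *)

Section TruncatedTensorAlgebra.
Variables (R : realType) (d N : nat).
Implicit Types (x y z : tens R d) (w : seq 'I_d).

Lemma tmulE x y w : (size w <= N)%N ->
  tmul N x y w = \sum_(0 <= i < (size w).+1) x (take i w) * y (drop i w).
Proof. by rewrite /tmul => ->. Qed.

Lemma tmul_trunc x y w : (N < size w)%N -> tmul N x y w = 0.
Proof. by rewrite /tmul ltnNge => /negbTE ->. Qed.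

Lemma tmulA x y z w : tmul N (tmul N x y) z w = tmul N x (tmul N y z) w.
Proof.
case: (leqP (size w) N) => hw; last by rewrite !tmul_trunc.
rewrite !tmulE //; set n := size w.
pose F i j := x (take i w) * y (take (j - i) (drop i w)) * z (drop j w).
have sum_left j : (0 <= j < n.+1)%N ->
    tmul N x y (take j w) * z (drop j w) = \sum_(0 <= i < n.+1 | (i <= j)%N) F i j.
  move=> /andP[_ hj]; have sj : size (take j w) = j by rewrite size_take_min; lia.
  rewrite tmulE ?sj; last lia.
  rewrite mulr_suml (big_nat_widen _ _ _ _ _ (_ : j.+1 <= n.+1)%N) //.
  by apply: eq_bigr => i /andP[_ hi]; rewrite /F take_takel // take_drop subnK.
have sum_right i : (0 <= i < n.+1)%N ->
    x (take i w) * tmul N y z (drop i w) = \sum_(0 <= j < n.+1 | (i <= j)%N) F i j.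
  move=> /andP[_ hi]; rewrite tmulE; last by rewrite size_drop; lia.
  rewrite mulr_sumr -[RHS]/(\sum_(0 <= j < n.+1 | true && (i <= j)%N) F i j).
  rewrite -big_nat_widenl // -[in RHS](add0n i) big_addn size_drop -/n.
  have -> : (n.+1 - i = (n - i).+1)%N by lia.
  by apply: eq_bigr => k _; rewrite /F addnK drop_drop mulrA take_drop.
rewrite (eq_big_nat _ _ sum_left) (eq_big_nat _ _ sum_right).
under eq_bigr do rewrite big_mkcond.
under [RHS]eq_bigr do rewrite big_mkcond.
by rewrite exchange_big_nat.
Qed.

Lemma tmul1l y w : (size w <= N)%N -> tmul N (@tunit R d) y w = y w.
Proof.
move=> hw; rewrite tmulE // big_nat_recl // take0 drop0 /= mul1r.
case: w hw => [|a w'] hw; first by rewrite big_geq ?addr0.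
by rewrite big1 ?addr0 // => i _ /=; rewrite mul0r.
Qed.

Lemma tmul1r y w : (size w <= N)%N -> tmul N y (@tunit R d) w = y w.
Proof.
move=> hw; rewrite tmulE // big_nat_recr // take_size drop_size /= mulr1.
rewrite big_nat_cond big1 ?add0r // => i /andP[/andP[_ hi] _].
case E: (drop i w) => [|b l]; last by rewrite mulr0.
by move: (congr1 size E); rewrite size_drop /=; lia.
Qed.

Lemma tmul1C y w : tmul N (@tunit R d) y w = tmul N y (@tunit R d) w.
Proof.
case: (leqP (size w) N) => hw; last by rewrite !tmul_trunc.
by rewrite tmul1l // tmul1r.
Qed.

Lemma tmulBr x y z w :
  tmul N x (fun u => y u - z u) w = tmul N x y w - tmul N x z w.
Proof.
case: (leqP (size w) N) => hw; last by rewrite !tmul_trunc // subr0.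
by rewrite !tmulE // -sumrB; apply: eq_bigr => i _; rewrite mulrBr.
Qed.

Lemma tmul_suml m (A : nat -> tens R d) y w :
  tmul N (fun u => \sum_(0 <= k < m) A k u) y w =
  \sum_(0 <= k < m) tmul N (A k) y w.
Proof.
case: (leqP (size w) N) => hw.
  rewrite tmulE //; under eq_bigr do rewrite mulr_suml.
  by rewrite exchange_big_nat; apply: eq_bigr => k _; rewrite tmulE.
by rewrite tmul_trunc // big1 // => k _; rewrite tmul_trunc.
Qed.

Lemma tpow_eq0 y k w : y [::] = 0 -> (size w < k)%N -> tpow N y k w = 0.
Proof.
move=> y0; elim: k w => [|k IH] w //= hw.
case: (leqP (size w) N) => hN; last by rewrite tmul_trunc.
rewrite tmulE // big_nat_recl // take0 y0 mul0r add0r big_nat_cond big1 //.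
by move=> i /andP[/andP[_ hi] _]; rewrite IH ?mulr0 // size_drop; lia.
Qed.

Lemma tpowSr y k w : tmul N (tpow N y k) y w = tpow N y k.+1 w.
Proof.
elim: k w => [|k IH] w /=; first by rewrite tmul1C.
by rewrite tmulA; congr (tmul N y _ w); apply: funext => u; rewrite IH.
Qed.

(* With y := 1 - x, the product x^{-1} x = (sum_{k <= N} y^k) (1 - y)
   telescopes to 1 - y^(N+1), and y^(N+1) vanishes on words of length <= N. *)
Lemma tmul_tinvl x w : x [::] = 1 -> (size w <= N)%N ->
  tmul N (tinv N x) x w = @tunit R d w.
Proof.
move=> x1 hw; set y := fun u => @tunit R d u - x u.
have y0 : y [::] = 0 by rewrite /y x1 subrr.
have xE : x = fun u => @tunit R d u - y u.
  by apply: funext => u; rewrite /y opprB addrC subrK.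
rewrite [X in tmul N _ X]xE tmulBr tmul1r // /tinv tmul_suml -/y.
under [X in _ - X]eq_bigr do rewrite tpowSr.
rewrite [X in X - _]big_nat_recl // [X in _ - X]big_nat_recr //=.
rewrite opprD addrA addrK -[tmul N y (tpow N y N) w]/(tpow N y N.+1 w).
by rewrite tpow_eq0 ?subr0 //; lia.
Qed.

End TruncatedTensorAlgebra.

Local Notation incr T t := (within [set h | (0 <= t + h <= T)%R] (0%R)^').

Section IntervalCalculus.
Variables (R : realType) (T : R).
Hypothesis T_gt0 : 0 < T.

Lemma near_incrP (t : R) (P : R -> Prop) :
  (\forall h \near incr T t, P h) <->
  exists2 e : R, 0 < e & forall h, `|h| < e -> h != 0 -> 0 <= t + h <= T -> P h.
Proof.
rewrite near_withinE /dnbhs near_withinE -nbhs_nbhs_norm.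
split=> -[e e0 He]; exists e => // h /=.
  by move=> he h0 hI; apply: He => //=; rewrite sub0r normrN.
by rewrite sub0r normrN => he h0 hI; apply: He.
Qed.

(* Uses T > 0: admissible increments exist to the right of t < T and to the left of t = T. *)
Lemma incr_proper t : I0T T t -> ProperFilter (incr T t).
Proof.
move=> /andP[t0 tT]; apply: Build_ProperFilter_ex => P /near_incrP [e e0 He].
have [tlT|tgeT] := ltP t T.
  pose m := Num.min e (T - t) / 2.
  have m1 : Num.min e (T - t) <= e by rewrite ge_min lexx.
  have m2 : Num.min e (T - t) <= T - t by rewrite ge_min lexx orbT.
  have m3 : 0 < Num.min e (T - t) by rewrite lt_min e0 subr_gt0.
  exists m; apply: He.
  - by rewrite ger0_norm /m; lra.
  - by apply/eqP; rewrite /m; lra.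
  - by apply/andP; split; rewrite /m; lra.
pose m := Num.min e T / 2.
have m1 : Num.min e T <= e by rewrite ge_min lexx.
have m2 : Num.min e T <= T by rewrite ge_min lexx orbT.
have m3 : 0 < Num.min e T by rewrite lt_min e0 T_gt0.
exists (- m); apply: He.
- by rewrite normrN ger0_norm /m; lra.
- by apply/eqP; rewrite /m; lra.
- by apply/andP; split; rewrite /m; lra.
Qed.

Section Derivatives.
Variable V : normedModType R.
Implicit Types (f g : R -> V) (l : V).

Definition derivw1 f t := lim ((fun h => h^-1 *: (f (t + h) - f t)) @ incr T t).

Lemma derivw_val f t l : I0T T t -> derivw T f t l -> derivw1 f t = l.
Proof. by move=> It; have incr_filter := incr_proper It; exact: cvg_lim. Qed.

Lemma derivw_eq_on f g t l : I0T T t -> (forall u, I0T T u -> f u = g u) ->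
  derivw T f t l -> derivw T g t l.
Proof.
move=> It fg; apply: cvg_trans; apply: near_eq_cvg.
apply/near_incrP; exists 1 => // h _ _ hI.
by rewrite !fg.
Qed.

Lemma derivw_cst (c : V) t : derivw T (fun _ => c) t 0.
Proof. by rewrite /derivw; under eq_fun do rewrite subrr scaler0; exact: cvg_cst. Qed.

Lemma derivwD f g t lf lg : derivw T f t lf -> derivw T g t lg ->
  derivw T (fun s => f s + g s) t (lf + lg).
Proof.
move=> hf hg; rewrite /derivw.
under eq_fun do rewrite opprD addrACA scalerDr.
exact: cvgD.
Qed.

Lemma derivwN f t lf : derivw T f t lf -> derivw T (fun s => - f s) t (- lf).
Proof.
move=> hf; rewrite /derivw.
under eq_fun do rewrite -opprD scalerN.
exact: cvgN.
Qed.

Lemma derivw_sum (I : eqType) (r : seq I) (P : pred I) (F : I -> R -> V) (L : I -> V) t :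
  (forall i, i \in r -> P i -> derivw T (F i) t (L i)) ->
  derivw T (fun s => \sum_(i <- r | P i) F i s) t (\sum_(i <- r | P i) L i).
Proof.
elim: r => [|i r IH] H.
  by rewrite big_nil; under eq_fun do rewrite big_nil; exact: derivw_cst.
have IHr : derivw T (fun s => \sum_(j <- r | P j) F j s) t (\sum_(j <- r | P j) L j).
  by apply: IH => j jr; apply: H; rewrite inE jr orbT.
rewrite big_cons; under eq_fun do rewrite big_cons.
case Pi: (P i) => //; apply: derivwD IHr; exact: H (mem_head _ _) Pi.
Qed.

Lemma derivw_cvg f t l : derivw T f t l -> (fun h => f (t + h)) @ incr T t --> f t.
Proof.
move=> hf.
have h0 : (fun h : R => h) @ incr T t --> (0 : R).
  apply/cvgrPdist_lt => eps eps0; apply/near_incrP; exists eps => // h hh _ _.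
  by rewrite sub0r normrN.
have hs : (fun h => f t + h *: (h^-1 *: (f (t + h) - f t))) @ incr T t --> f t.
  by rewrite -[X in _ --> X]addr0 -(scale0r l); apply: cvgD (cvg_cst _) (cvgZ h0 hf).
apply: cvg_trans hs; apply: near_eq_cvg; apply/near_incrP; exists 1 => // h _ hn0 _.
by rewrite /= scalerA mulfV // scale1r addrC subrK.
Qed.

Lemma derivwZ (a : R -> R) f t la lf : derivw T a t la -> derivw T f t lf ->
  derivw T (fun s => a s *: f s) t (la *: f t + a t *: lf).
Proof.
move=> ha hf; rewrite /derivw.
have -> : (fun h : R => h^-1 *: (a (t + h) *: f (t + h) - a t *: f t)) =
    (fun h => (h^-1 *: (a (t + h) - a t)) *: f (t + h) + a t *: (h^-1 *: (f (t + h) - f t))).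
  apply: funext => h; rewrite !scalerBr !scalerBl !scalerA.
  by rewrite [a t * h^-1]mulrC addrA subrK.
exact: cvgD (cvgZ ha (derivw_cvg hf)) (cvgZ (cvg_cst _) hf).
Qed.

End Derivatives.

Lemma derivw_comp (U W : normedModType R) (Y : R -> U) (phi : U -> W) t l :
  derivw T Y t l -> differentiable phi (Y t) ->
  derivw T (fun s => phi (Y s)) t ('d phi (Y t) l).
Proof.
move=> hY hphi; set L := 'd phi (Y t); set u := fun h => Y (t + h) - Y t.
have phi_taylor eps : 0 < eps -> \forall v \near (0 : U),
    `|phi (v + Y t) - (phi (Y t) + L v)| <= eps * `|v|.
  by move=> eps0; have /eqaddoP := diff_locally hphi; apply.
have u_cvg : u @ incr T t --> (0 : U).
  by rewrite -(subrr (Y t)); apply: cvgB (derivw_cvg hY) (cvg_cst _).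
rewrite /derivw.
have -> : (fun h : R => h^-1 *: (phi (Y (t + h)) - phi (Y t))) =
    (fun h => h^-1 *: (phi (u h + Y t) - (phi (Y t) + L (u h))) + L (h^-1 *: u h)).
  apply: funext => h; rewrite linearZ /= /u subrK -scalerDr.
  by rewrite opprD addrA subrK.
rewrite -[X in _ --> X]add0r; apply: cvgD; last first.
  have hL : continuous L by exact: diff_continuous.
  by rewrite /u; apply: (@cvg_comp _ _ _ _ _ _ _ _ hY (hL l)).
apply/cvgrPdist_le => eps eps0.
have quot_bdd : \forall h \near incr T t, `|h^-1 *: u h| <= `|l| + 1.
  move/cvgrPdist_le : hY => /(_ 1 ltr01); apply: filterS => h hh.
  by have := ler_normB l (l - h^-1 *: u h); rewrite subKr; move: hh; rewrite /u; lra.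
have l1 : 0 < `|l| + 1 by rewrite ltr_wpDl.
set e' := eps / (`|l| + 1); have e'0 : 0 < e' by rewrite divr_gt0.
apply: filterS2 quot_bdd (u_cvg _ (phi_taylor e' e'0)) => h qbh ueh.
rewrite sub0r normrN normrZ.
have := ler_wpM2l (normr_ge0 h^-1) ueh; rewrite mulrCA -normrZ => /le_trans; apply.
have -> : eps = e' * (`|l| + 1) by rewrite mulfVK // lt0r_neq0.
by rewrite -normrZ; apply: ler_wpM2l => //; exact: ltW.
Qed.

Section SmoothOfOrder.
Variable V : normedModType R.
Implicit Types (f g : R -> V).

Fixpoint Cn (n : nat) f : Prop :=
  if n is m.+1 then exists g : R -> V,
    (forall t, I0T T t -> derivw T f t (g t)) /\ Cn m g
  else True.

Lemma Cn_eq_on n f g : (forall u, I0T T u -> f u = g u) -> Cn n f -> Cn n g.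
Proof.
case: n => [//|n] fg [p [hp cp]]; exists p; split => // t It.
exact: derivw_eq_on (hp t It).
Qed.

Lemma CnS n f : Cn n.+1 f -> Cn n f.
Proof. by elim: n f => [//|n IH] f [p [hp /IH cp]]; exists p. Qed.

Lemma Cn_cst n (c : V) : Cn n (fun _ => c).
Proof.
elim: n c => [//|n IH] c; exists (fun _ => 0); split => // t _.
exact: derivw_cst.
Qed.

Lemma CnD n f g : Cn n f -> Cn n g -> Cn n (fun s => f s + g s).
Proof.
elim: n f g => [//|n IH] f g [p [hp cp]] [q [hq cq]].
exists (fun s => p s + q s); split; last exact: IH.
by move=> t It; exact: derivwD (hp t It) (hq t It).
Qed.

Lemma CnN n f : Cn n f -> Cn n (fun s => - f s).
Proof.
elim: n f => [//|n IH] f [p [hp cp]].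
exists (fun s => - p s); split; last exact: IH.
by move=> t It; exact: derivwN (hp t It).
Qed.

Lemma Cn_sum n (I : eqType) (r : seq I) (P : pred I) (F : I -> R -> V) :
  (forall i, i \in r -> P i -> Cn n (F i)) -> Cn n (fun s => \sum_(i <- r | P i) F i s).
Proof.
elim: r => [|i r IH] H.
  by under eq_fun do rewrite big_nil; exact: Cn_cst.
have IHr : Cn n (fun s => \sum_(j <- r | P j) F j s).
  by apply: IH => j jr; apply: H; rewrite inE jr orbT.
under eq_fun do rewrite big_cons.
case Pi: (P i) => //; apply: CnD IHr; exact: H (mem_head _ _) Pi.
Qed.

End SmoothOfOrder.

Lemma CnZ (V : normedModType R) n (a : R -> R) (f : R -> V) :
  Cn n a -> Cn n f -> Cn n (fun s => a s *: f s).
Proof.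
elim: n a f => [//|n IH] a f ha hf.
have ha' := CnS ha; have hf' := CnS hf.
case: ha => [p [hp cp]]; case: hf => [q [hq cq]].
exists (fun s => p s *: f s + a s *: q s); split.
  by move=> t It; exact: derivwZ (hp t It) (hq t It).
by apply: CnD; exact: IH.
Qed.

Definition Cinf (V : normedModType R) (f : R -> V) := forall n, Cn n f.

Lemma Cinf_derivw1 (V : normedModType R) (f : R -> V) : Cinf f ->
  (forall t, I0T T t -> derivw T f t (derivw1 f t)) /\ Cinf (derivw1 f).
Proof.
move=> hf.
have der n : exists2 p, (forall t, I0T T t -> derivw T f t (p t)) & Cn n p.
  by have [p [hp cp]] := hf n.+1; exists p.
split.
  by move=> t It; have [p hp _] := der 0%N; rewrite (derivw_val It (hp t It)); exact: hp.
move=> n; have [p hp cp] := der n; apply: Cn_eq_on cp => u Iu.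
by rewrite (derivw_val Iu (hp u Iu)).
Qed.

Lemma smooth_onP (V : normedModType R) (f : R -> V) : smooth_on T f <-> Cinf f.
Proof.
split.
  move=> [D [D0 HD]] n; have CnD k : Cn n (D k).
    by elim: n k => [//|m IH] k; exists (D k.+1); split => // t It; exact: HD.
  by apply: Cn_eq_on (CnD 0%N) => u Iu; exact: D0.
move=> hf; pose D k := iter k (@derivw1 V) f.
have CinfD k : Cinf (D k) by elim: k => [//|k IH]; exact: (Cinf_derivw1 IH).2.
by exists D; split => // k t It; exact: (Cinf_derivw1 (CinfD k)).1.
Qed.

Lemma Cinf_cst (V : normedModType R) (c : V) : Cinf (fun _ => c).
Proof. by move=> n; exact: Cn_cst. Qed.

Lemma CinfD (V : normedModType R) (f g : R -> V) :
  Cinf f -> Cinf g -> Cinf (fun s => f s + g s).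
Proof. by move=> hf hg n; exact: CnD. Qed.

Lemma CinfN (V : normedModType R) (f : R -> V) : Cinf f -> Cinf (fun s => - f s).
Proof. by move=> hf n; exact: CnN. Qed.

Lemma CinfM (a b : R -> R) : Cinf a -> Cinf b -> Cinf (fun s => a s * b s).
Proof. by move=> ha hb n; exact: (@CnZ R^o). Qed.

Lemma Cinf_sum (V : normedModType R) (I : eqType) (r : seq I) (P : pred I)
    (F : I -> R -> V) :
  (forall i, P i -> Cinf (F i)) -> Cinf (fun s => \sum_(i <- r | P i) F i s).
Proof. by move=> H n; apply: Cn_sum => i _ Pi; exact: H. Qed.

Lemma Cinf_eq_on (V : normedModType R) (f g : R -> V) :
  (forall u, I0T T u -> f u = g u) -> Cinf f -> Cinf g.
Proof. by move=> fg hf n; exact: Cn_eq_on (hf n). Qed.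

End IntervalCalculus.

Section LittleO.
Variables (R : realType) (T : R) (V : normedModType R).

Definition littleo_at (phi : R -> V) (s : R) := forall eps : R, 0 < eps ->
  \forall t \near within (I0T T) (nbhs s), `|phi t| <= eps * `|t - s|.

Lemma near_I0TP (s : R) (P : R -> Prop) :
  (\forall t \near within (I0T T) (nbhs s), P t) <->
  exists2 e : R, 0 < e & forall t, `|t - s| < e -> I0T T t -> P t.
Proof.
rewrite near_withinE -nbhs_nbhs_norm.
by split=> -[e e0 He]; exists e => // t /=; rewrite distrC; apply: He.
Qed.

Lemma littleo_at_eq_on (phi psi : R -> V) s :
  (forall t, I0T T t -> phi t = psi t) -> littleo_at phi s -> littleo_at psi s.
Proof.
move=> phipsi hphi eps eps0; have /near_I0TP [del del0 Hd] := hphi eps eps0.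
by apply/near_I0TP; exists del => // t ht It; rewrite -phipsi //; exact: Hd.
Qed.

Lemma derivw0P (phi : R -> V) s : I0T T s ->
  phi s = 0 /\ derivw T phi s 0 <-> littleo_at phi s.
Proof.
move=> Is; split.
  move=> [phi0 hd] eps eps0.
  move/cvgrPdist_le : hd => /(_ eps eps0) /near_incrP [del del0 Hd].
  apply/near_I0TP; exists del => // t ht It.
  have [->|ts] := eqVneq t s; first by rewrite phi0 subrr !normr0 mulr0.
  have := Hd (t - s) ht; rewrite subr_eq0 addrC subrK phi0 subr0 sub0r normrN normrZ.
  by move=> /(_ ts It); rewrite normfV ler_pdivrMl ?normr_gt0 ?subr_eq0 // mulrC.
move=> H; have phi0 : phi s = 0.
  have /near_I0TP [del del0 Hd] := H 1 ltr01.
  by have := Hd s; rewrite subrr normr0 mulr0 normr_le0 => /(_ del0 Is) /eqP.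
split => //; apply/cvgrPdist_le => eps eps0.
have /near_I0TP [del del0 Hd] := H eps eps0.
apply/near_incrP; exists del => // h hh h0 hI.
have := Hd (s + h); rewrite addrC addKr => /(_ hh hI).
by rewrite phi0 subr0 sub0r normrN normrZ normfV ler_pdivrMl ?normr_gt0 // mulrC.
Qed.

End LittleO.

Section InfinitelyDifferentiable.
Variables (R : realType) (e : nat).
Local Notation U := 'rV[R]_e.

Lemma differentiable_entry (g : U -> U) y j : differentiable g y ->
  differentiable (fun z => g z 0 j) y.
Proof. by move=> dg; exact: differentiable_comp dg (differentiable_coord _ 0 j). Qed.

Lemma derive_entry (g : U -> U) y u j : derivable g y u ->
  'D_u (fun z => g z 0 j) y = ('D_u g y) 0 j.
Proof.
move=> dg; rewrite /derive.
have -> : (fun h : R => h^-1 *: (((fun z => g z 0 j) \o shift y) (h *: u) - g y 0 j)) =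
    (fun v : U => v 0 j) \o (fun h : R => h^-1 *: ((g \o shift y) (h *: u) - g y)).
  by apply: funext => h /=; rewrite !mxE.
exact: cvg_lim (cvg_comp _ _ dg (@coord_continuous R 1 e 0 j _)).
Qed.

Lemma derive_basis (phi : U -> R) y u : differentiable phi y ->
  'D_u phi y = \sum_(i < e) u 0 i * 'D_('e_i) phi y.
Proof.
move=> dphi; rewrite deriveE // {1}(row_sum_delta u) linear_sum.
by apply: eq_bigr => i _; rewrite linearZ deriveE.
Qed.

Definition D_closed (P : (U -> R) -> Prop) :=
  forall phi, P phi -> (forall y, differentiable phi y) /\
    forall v, P (fun y => 'D_v phi y).

(* A coinductive encoding of C^infinity: membership in some D-closed family. *)
Definition infdiff (phi : U -> R) := exists P, D_closed P /\ P phi.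

Lemma D_closed_infdiff : D_closed infdiff.
Proof.
move=> phi [P [closedP Pphi]]; have [dphi DP] := closedP _ Pphi.
by split=> // v; exists P; split; last exact: DP.
Qed.

Lemma infdiff_differentiable phi y : infdiff phi -> differentiable phi y.
Proof. by move=> /D_closed_infdiff []. Qed.

Lemma infdiff_derive phi v : infdiff phi -> infdiff (fun y => 'D_v phi y).
Proof. by move=> /D_closed_infdiff [] _. Qed.

Lemma infdiff_cst c : infdiff (fun _ => c).
Proof.
exists (fun phi => exists c, phi = fun _ => c); split; last by exists c.
move=> _ [c' ->]; split=> [y|v]; first exact: differentiable_cst.
by exists 0; apply: funext => y; exact: derive_cst.
Qed.

Lemma infdiff_entry j : infdiff (fun y : U => y 0 j).
Proof.
exists (fun phi => phi = (fun y : U => y 0 j) \/ exists c, phi = fun _ => c).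
split; last by left.
move=> _ [->|[c ->]]; split=> [y|v].
- exact: differentiable_coord.
- right; exists (v 0 j); apply: funext => y.
  by rewrite derive_entry ?derive_id //; exact: derivable_id.
- exact: differentiable_cst.
- by right; exists 0; apply: funext => y; exact: derive_cst.
Qed.

Inductive infdiff_ring : (U -> R) -> Prop :=
| infdiff_ring_gen phi : infdiff phi -> infdiff_ring phi
| infdiff_ringD phi psi : infdiff_ring phi -> infdiff_ring psi ->
    infdiff_ring (fun y => phi y + psi y)
| infdiff_ringM phi psi : infdiff_ring phi -> infdiff_ring psi ->
    infdiff_ring (fun y => phi y * psi y).

(* The Leibniz rule keeps the ring generated by infdiff closed under derivatives. *)
Lemma D_closed_infdiff_ring : D_closed infdiff_ring.
Proof.
move=> phi; elim=> {phi} [phi hphi|phi psi _ [dphi Dphi] _ [dpsi Dpsi]|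
                          phi psi Pphi [dphi Dphi] Ppsi [dpsi Dpsi]].
- split=> [y|v]; first exact: infdiff_differentiable.
  by apply: infdiff_ring_gen; exact: infdiff_derive.
- split=> [y|v]; first exact: (differentiableD (dphi y) (dpsi y)).
  have -> : (fun y => 'D_v (fun z => phi z + psi z) y) = (fun y => 'D_v phi y + 'D_v psi y).
    apply: funext => y; apply: (deriveD (f := phi) (g := psi));
      exact: diff_derivable.
  exact: infdiff_ringD.
- split=> [y|v]; first exact: (differentiableM (dphi y) (dpsi y)).
  have -> : (fun y => 'D_v (fun z => phi z * psi z) y) =
      (fun y => phi y * 'D_v psi y + psi y * 'D_v phi y).
    apply: funext => y; apply: (deriveM (f := phi) (g := psi));
      exact: diff_derivable.
  by apply: infdiff_ringD; apply: infdiff_ringM.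
Qed.

Lemma infdiff_ringP phi : infdiff_ring phi -> infdiff phi.
Proof. by move=> hphi; exists infdiff_ring; split=> //; exact: D_closed_infdiff_ring. Qed.

Lemma infdiffD phi psi : infdiff phi -> infdiff psi -> infdiff (fun y => phi y + psi y).
Proof. by move=> hphi hpsi; apply/infdiff_ringP/infdiff_ringD; exact: infdiff_ring_gen. Qed.

Lemma infdiffM phi psi : infdiff phi -> infdiff psi -> infdiff (fun y => phi y * psi y).
Proof. by move=> hphi hpsi; apply/infdiff_ringP/infdiff_ringM; exact: infdiff_ring_gen. Qed.

Lemma infdiff_sum (I : Type) (r : seq I) (P : pred I) (F : I -> U -> R) :
  (forall i, P i -> infdiff (F i)) -> infdiff (fun y => \sum_(i <- r | P i) F i y).
Proof.
move=> H; elim: r => [|i r IH]; first by under eq_fun do rewrite big_nil; exact: infdiff_cst.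
under eq_fun do rewrite big_cons.
by case Pi: (P i) => //; apply: infdiffD IH; exact: H.
Qed.

Definition infdiffv (h : U -> U) := forall j, infdiff (fun y => h y 0 j).

Lemma infdiffv_differentiable h y : infdiffv h -> differentiable h y.
Proof.
move=> hS; have -> : h = \sum_(j < e) (fun z => h z 0 j *: ('e_j : U)).
  by apply: funext => z; rewrite fct_sumE; exact: row_sum_delta.
apply: differentiable_sum => j; apply: differentiableZl; exact: infdiff_differentiable.
Qed.

Lemma infdiffv_act f g : infdiffv f -> infdiffv g -> infdiffv (vf_act f g).
Proof.
move=> hf hg j.
have -> : (fun y => vf_act f g y 0 j) =
    (fun y => \sum_(i < e) f y 0 i * 'D_('e_i) (fun z => g z 0 j) y).
  apply: funext => y; rewrite /vf_act -derive_entry; last first.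
    exact/diff_derivable/infdiffv_differentiable.
  by apply: derive_basis; exact: infdiff_differentiable.
apply: infdiff_sum => i _; apply: infdiffM; first exact: hf.
exact/infdiff_derive/hg.
Qed.

Lemma smooth_bdd_infdiffv (g : vf R e) : smooth_bdd g -> infdiffv g.
Proof.
move=> [hd _] j.
exists (fun phi => exists vs, phi = fun y => Dn g vs y 0 j); split; last by exists [::].
move=> _ [vs ->]; split=> [y|v]; first exact/differentiable_entry/hd.
exists (v :: vs); apply: funext => y /=.
by rewrite derive_entry //; exact: diff_derivable (hd vs y).
Qed.

Lemma infdiffv_fword d (f : 'I_d -> vf R e) : (forall i, smooth_bdd (f i)) ->
  forall w, infdiffv (fword f w).
Proof.
move=> hf; elim=> [|l [|l' w'] IH]; first exact: infdiff_entry.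
  exact: smooth_bdd_infdiffv (hf l).
exact: infdiffv_act (smooth_bdd_infdiffv (hf l)) IH.
Qed.

End InfinitelyDifferentiable.

Section SignatureIncrements.
Variables (R : realType) (T : R) (d N : nat) (X : R -> tens R d).
Hypothesis T_gt0 : 0 < T.
Hypothesis X_sgrp : sgrp T N X.

(* Shuffling with the empty word gives <X, w> = <X, 1> <X, w>, and some <X, w> is nonzero. *)
Lemma sgrp_nil t : I0T T t -> X t [::] = 1.
Proof.
move=> It; have [X_nz [X_shuffle _]] := X_sgrp.
have [w0 [hw0 nz]] := X_nz t It.
have := X_shuffle t It [::] w0 hw0.
rewrite /coef_shuffle /shuffle /= big_cons big_nil addr0 revK => E.
have : (X t [::] - 1) * X t w0 = 0 by rewrite mulrBl mul1r -E subrr.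
by move/eqP; rewrite mulf_eq0 (negbTE nz) orbF subr_eq0 => /eqP.
Qed.

Lemma Xinc_diag s w : I0T T s -> (size w <= N)%N -> Xinc N X s s w = tunit R w.
Proof. by move=> Is hw; rewrite /Xinc tmul_tinvl // sgrp_nil. Qed.

Lemma Cinf_X u : (size u <= N)%N -> Cinf T (fun t => X t u).
Proof. by move=> hu; apply/(smooth_onP T_gt0); exact: X_sgrp.2.2. Qed.

Lemma Cinf_tinv u : (size u <= N)%N -> Cinf T (fun s => tinv N (X s) u).
Proof.
move=> hu; apply: Cinf_sum => k _; elim: k u hu => [|k IH] u hu /=.
  exact: Cinf_cst.
under eq_fun do rewrite tmulE //.
apply: Cinf_sum => i _; apply: CinfM; last by apply: IH; rewrite size_drop; lia.
apply: CinfD (Cinf_cst _ _) (CinfN (Cinf_X _)).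
by rewrite size_take_min; lia.
Qed.

Lemma derivw_Xinc_sum s w : I0T T s -> (size w <= N)%N ->
  derivw T (fun t => Xinc N X s t w : R^o) s (\sum_(0 <= i < (size w).+1)
    tinv N (X s) (take i w) * derivw1 T (fun t => X t (drop i w)) s).
Proof.
move=> Is hw; have -> : (fun t => Xinc N X s t w : R^o) =
    (fun t => \sum_(0 <= i < (size w).+1) tinv N (X s) (take i w) *: X t (drop i w)).
  by apply: funext => t; rewrite /Xinc tmulE.
apply: derivw_sum => i _ _.
have hi : (size (drop i w) <= N)%N by rewrite size_drop; lia.
have := derivwZ (derivw_cst T (tinv N (X s) (take i w)) s)
  ((Cinf_derivw1 T_gt0 (Cinf_X hi)).1 s Is).
by rewrite scale0r add0r.
Qed.

Lemma XdotE s w : I0T T s -> (size w <= N)%N ->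
  Xdot N T X s w = \sum_(0 <= i < (size w).+1)
    tinv N (X s) (take i w) * derivw1 T (fun t => X t (drop i w)) s.
Proof. by move=> Is hw; exact: (derivw_val T_gt0 Is (derivw_Xinc_sum Is hw)). Qed.

Lemma derivw_Xinc s w : I0T T s -> (size w <= N)%N ->
  derivw T (fun t => Xinc N X s t w : R^o) s (Xdot N T X s w).
Proof. by move=> Is hw; rewrite XdotE //; exact: derivw_Xinc_sum. Qed.

Lemma Cinf_Xdot w : (size w <= N)%N -> Cinf T (fun s => Xdot N T X s w).
Proof.
move=> hw; apply: Cinf_eq_on (fun u Iu => esym (XdotE Iu hw)) _.
apply: Cinf_sum => i _; apply: CinfM.
  by apply: Cinf_tinv; rewrite size_take_min; lia.
by apply: (Cinf_derivw1 T_gt0 _).2; apply: Cinf_X; rewrite size_drop; lia.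
Qed.

Lemma Xdot_nil s : I0T T s -> Xdot N T X s [::] = 0.
Proof.
move=> Is; rewrite XdotE // big_nat1 take0 drop0.
have X_nil_cst : derivw T (fun t => X t [::] : R^o) s 0.
  by apply: (derivw_eq_on Is _ (derivw_cst T (1 : R^o) s)) => u Iu; rewrite sgrp_nil.
by rewrite (derivw_val T_gt0 Is X_nil_cst) mulr0.
Qed.

End SignatureIncrements.

Section Solutions.
Variables (R : realType) (T : R) (d e N : nat).
Variables (X : R -> tens R d) (f : 'I_d -> vf R e) (Y : R -> 'rV[R]_e).
Hypothesis T_gt0 : 0 < T.
Hypothesis X_sgrp : sgrp T N X.

Definition rde_field s := \sum_(0 <= k < N.+1) \sum_(w : k.-tuple 'I_d)
  Xdot N T X s w *: fword f w (Y s).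

Definition sig_expansion s t := \sum_(1 <= k < N.+1) \sum_(w : k.-tuple 'I_d)
  Xinc N X s t w *: fword f w (Y s).

Lemma sig_expansion_diag s : I0T T s -> sig_expansion s s = 0.
Proof.
move=> Is; rewrite /sig_expansion big_nat_cond big1 // => k /andP[/andP[k_gt0 kN] _].
rewrite big1 // => w _; rewrite (Xinc_diag X_sgrp Is) ?size_tuple //.
have : tval w != [::] by rewrite -size_eq0 size_tuple -lt0n.
by case: (tval w) => [|a l] //= _; rewrite scale0r.
Qed.

Lemma derivw_sig_expansion s : I0T T s -> derivw T (sig_expansion s) s (rde_field s).
Proof.
move=> Is; rewrite /sig_expansion /rde_field big_ltn // big1 ?add0r; last first.
  move=> w _; have -> : tval w = [::] by apply: size0nil; rewrite size_tuple.
  by rewrite (Xdot_nil T_gt0 X_sgrp Is) scale0r.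
apply: derivw_sum => k /[!mem_index_iota] /andP[_ hk] _.
apply: derivw_sum => w _ _; have hw : (size w <= N)%N by rewrite size_tuple.
have := derivwZ (derivw_Xinc T_gt0 X_sgrp Is hw) (derivw_cst T (fword f w (Y s)) s).
by rewrite scaler0 addr0.
Qed.

Lemma solution_littleoP s : I0T T s ->
  derivw T Y s (rde_field s) <->
  littleo_at T (fun t => Y t - Y s - sig_expansion s t) s.
Proof.
move=> Is; have rem_s : Y s - Y s - sig_expansion s s = 0.
  by rewrite sig_expansion_diag // subrr subr0.
split=> [Y_solves|/(derivw0P _ Is) [_ rem_flat]].
  apply/derivw0P => //; split=> //.
  have := derivwD (derivwD Y_solves (derivwN (derivw_cst T (Y s) s)))
    (derivwN (derivw_sig_expansion Is)).
  by rewrite oppr0 addr0 subrr.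
have := derivwD (derivw_cst T (Y s) s) (derivwD (derivw_sig_expansion Is) rem_flat).
rewrite add0r addr0; apply: derivw_eq_on Is _ => t _.
by rewrite [sig_expansion s t + _]addrC subrK addrC subrK.
Qed.

Section Regularity.
Hypothesis f_smooth : forall i, smooth_bdd (f i).
Hypothesis Y_solves : forall s, I0T T s -> derivw T Y s (rde_field s).

(* By the chain rule and the equation for Y, the derivative of a (h o Y)
   is a finite sum of terms of the same shape. *)
Lemma Cn_comp_solution n (a : R -> R) (h : 'rV[R]_e -> R) :
  Cinf T a -> infdiff h -> Cn T n (fun s => a s * h (Y s)).
Proof.
elim: n a h => [//|n IH] a h a_smooth h_smooth.
have [da Cinf_da] := Cinf_derivw1 T_gt0 a_smooth.
exists (fun t => derivw1 T a t * h (Y t) +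
  \sum_(i < e) \sum_(0 <= k < N.+1) \sum_(w : k.-tuple 'I_d)
     (a t * Xdot N T X t w) * (fword f w (Y t) 0 i * 'D_('e_i) h (Y t))).
split.
  move=> t It; have dh := infdiff_differentiable (Y t) h_smooth.
  have -> : \sum_(i < e) \sum_(0 <= k < N.+1) \sum_(w : k.-tuple 'I_d)
      (a t * Xdot N T X t w) * (fword f w (Y t) 0 i * 'D_('e_i) h (Y t)) =
      a t * 'd h (Y t) (rde_field t).
    rewrite -deriveE // derive_basis // mulr_sumr; apply: eq_bigr => i _.
    rewrite /rde_field summxE mulr_suml mulr_sumr; apply: eq_bigr => k _.
    rewrite summxE mulr_suml mulr_sumr; apply: eq_bigr => w _.
    by rewrite mxE; ring.
  exact: derivwZ (da t It) (derivw_comp (Y_solves It) dh).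
apply: CnD; first exact: IH.
apply: Cn_sum => i _ _; apply: Cn_sum => k /[!mem_index_iota] /andP[_ hk] _.
apply: Cn_sum => w _ _; have hw : (size w <= N)%N by rewrite size_tuple.
apply: (IH (fun t => a t * Xdot N T X t w) (fun y => fword f w y 0 i * 'D_('e_i) h y)).
  exact: CinfM a_smooth (Cinf_Xdot T_gt0 X_sgrp hw).
exact: infdiffM (infdiffv_fword f_smooth w i) (infdiff_derive _ h_smooth).
Qed.

Lemma solution_smooth : smooth_on T Y.
Proof.
apply/(smooth_onP T_gt0) => n.
have -> : Y = fun s => \sum_(j < e) (1 * Y s 0 j) *: ('e_j : 'rV[R]_e).
  by apply: funext => s; under eq_bigr do rewrite mul1r; exact: row_sum_delta.
apply: Cn_sum => j _ _; apply: CnZ (Cn_cst _ _ _).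
apply: (@Cn_comp_solution n (fun _ => 1) (fun y => y 0 j)).
  exact: Cinf_cst.
exact: infdiff_entry.
Qed.

End Regularity.
End Solutions.

Unset Implicit Arguments.
Theorem proposition2p20 (R : realType) (T : R) (d e N : nat)
    (X : R -> tens R d) (f : 'I_d -> vf R e) (Y : R -> 'rV[R]_e) :
  0 < T -> (0 < d)%N -> (0 < e)%N ->
  sgrp T N X ->
  (forall i, smooth_bdd (f i)) ->
  rde_solution N T X f Y <->
  exists r : R -> R -> 'rV[R]_e,
    (forall s t, I0T T s -> I0T T t ->
       Y t - Y s = \sum_(1 <= k < N.+1) \sum_(w : k.-tuple 'I_d)
                     Xinc N X s t w *: fword f w (Y s) + r s t) /\
    (forall s, I0T T s -> forall eps : R, 0 < eps ->
       \forall t \near within (I0T T) (nbhs s), `|r s t| <= eps * `|t - s|).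
Proof.
move=> T_gt0 _ _ X_sgrp f_smooth; split.
  move=> [_ Y_solves].
  exists (fun s t => Y t - Y s - sig_expansion N X f Y s t); split.
    by move=> s t _ _; rewrite [RHS]addrC /sig_expansion subrK.
  by move=> s Is; apply/(solution_littleoP f Y T_gt0 X_sgrp Is)/Y_solves.
move=> [r [rE r_small]].
have Y_solves s : I0T T s -> derivw T Y s (rde_field T N X f Y s).
  move=> Is; apply/(solution_littleoP f Y T_gt0 X_sgrp Is).
  apply: (littleo_at_eq_on _ (r_small s Is)) => t It.
  by rewrite (rE s t Is It) /sig_expansion addrAC subrr add0r.
by split; [exact: solution_smooth T_gt0 X_sgrp f_smooth Y_solves | exact: Y_solves].
Qed.
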